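(* Let $G=GL_n(\mathbb C)$, $\mathfrak g=\mathfrak{gl}_n(\mathbb C)$, $v_0\in\mathbb C^n$ nonzero, $P=\{g\in G:gv_0=v_0\}$ with Lie algebra $\mathfrak p=\{A\in\mathfrak g:Av_0=0\}$, and let $\mathfrak p^\perp$ be the orthogonal of $\mathfrak p$ for the form $(A,B)\mapsto\mathrm{trace}(AB)$. Let $X$ be a regular nilpotent element of $\mathfrak g$ (a single Jordan block). If the orbit $P.X$ (under conjugation) is not open dense in $G.X$, then there exists a semisimple $Y\in\mathfrak g$ not in the center of $\mathfrak g$ such that $[X,Y]\in\mathfrak p^\perp$. *)

(* C is any numClosedFieldType (e.g. the complex numbers);
   matrices carry the entrywise-norm (Euclidean) topology. *)
From HB Require Import structures.
From mathcomp Require Import all_boot all_order all_algebra.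
Set Implicit Arguments. Unset Strict Implicit. Unset Printing Implicit Defensive.
Import Order.TTheory GRing.Theory Num.Theory.
Local Open Scope ring_scope.

Section Defs.
Variables (C : numClosedFieldType) (n : nat).

Definition conjmx (g X : 'M[C]_n) : 'M[C]_n := g *m X *m invmx g.

Definition GL_orbit (X : 'M[C]_n) : 'M[C]_n -> Prop :=
  fun A => exists2 g : 'M[C]_n, g \in unitmx & A = conjmx g X.

Definition stabP (v0 : 'cV[C]_n) (g : 'M[C]_n) : Prop :=
  g \in unitmx /\ g *m v0 = v0.

Definition P_orbit (v0 : 'cV[C]_n) (X : 'M[C]_n) : 'M[C]_n -> Prop :=
  fun A => exists2 g : 'M[C]_n, stabP v0 g & A = conjmx g X.

Definition lie_p (v0 : 'cV[C]_n) (A : 'M[C]_n) : Prop := A *m v0 = 0.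

Definition lie_p_perp (v0 : 'cV[C]_n) (B : 'M[C]_n) : Prop :=
  forall A : 'M[C]_n, lie_p v0 A -> \tr (A *m B) = 0.

Definition mx_close (e : C) (A B : 'M[C]_n) : Prop :=
  forall i j, `|A i j - B i j| < e.

Definition open_in (S T : 'M[C]_n -> Prop) : Prop :=
  (forall A, S A -> T A) /\
  forall A, S A -> exists2 e : C, 0 < e &
    forall B, T B -> mx_close e B A -> S B.

Definition dense_in (S T : 'M[C]_n -> Prop) : Prop :=
  forall A, T A -> forall e : C, 0 < e -> exists2 B, S B & mx_close e B A.

Definition nilJordan : 'M[C]_n := \matrix_(i, j) (j == i.+1 :> nat)%:R.

Definition regular_nilpotent (X : 'M[C]_n) : Prop :=
  exists2 g : 'M[C]_n, g \in unitmx & X = conjmx g nilJordan.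

(* semisimple = diagonalizable (C algebraically closed) *)
Definition semisimple (Y : 'M[C]_n) : Prop :=
  exists2 g : 'M[C]_n, g \in unitmx & is_diag_mx (conjmx g Y).

Definition central (Y : 'M[C]_n) : Prop := is_scalar_mx Y.

Definition lie_bracket (X Y : 'M[C]_n) : 'M[C]_n := X *m Y - Y *m X.

End Defs.

From Pilot Require Import Defs.
From HB Require Import structures.
From mathcomp Require Import all_boot all_order all_algebra zify.
Set Implicit Arguments. Unset Strict Implicit. Unset Printing Implicit Defensive.
Import Order.TTheory GRing.Theory Num.Theory.
Local Open Scope ring_scope.

(* Proof of Theorem 1.1 for a regular nilpotent X = g J g^-1, J the nilpotent
   Jordan block of size N = n+1, and u := g^-1 v0 (the coordinates of v0 in
   the Jordan basis of X).  The proof splits on the last coordinate of u.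

   - If u_last != 0 then v0 is a cyclic vector of X.  The Krylov matrix
     (X^n v0 | ... | X v0 | v0) conjugates J to X and, since its last column
     is v0, any two matrices of G.X with v0 cyclic are P-conjugate.  Hence
     P.X = { B in G.X | B^n v0 != 0 }: this set is open (B |-> B^n v0 is
     locally Lipschitz) and dense (a shear 1 + tE of the Jordan basis makes
     v0 cyclic while moving B only by O(t)).  This contradicts the hypothesis.
   - If u_last = 0, let m < n be the last index with u_m != 0.  An upper
     triangular Toeplitz matrix c commutes with J and maps e_m to u, so
     X = h J h^-1 and v0 = h e_m with h := g c.  For the diagonal 0/1 matrix
     D with ones after position m, [J, D] = E_(m,m+1); hence Y := h D h^-1 is
     semisimple, not central, and [X, Y] = v0 (e_(m+1)^T h^-1) is a rank-one
     matrix with column v0, which lies in p^perp. *)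

Section Conjugation.
Variables (C : numClosedFieldType) (n : nat).
Local Notation N := n.+1.
Local Notation cj := (@Defs.conjmx C N).

Lemma conjmxE (g A : 'M[C]_N) : cj g A = g *m A *m invmx g.
Proof. by []. Qed.

Lemma mulmx_unit_eq0 (g : 'M[C]_N) m (x : 'M[C]_(N, m)) : g \in unitmx ->
  (g *m x == 0) = (x == 0).
Proof.
move=> ug; apply/idP/idP => /eqP Hx; last by rewrite Hx mulmx0.
by rewrite -(mulKmx ug x) Hx mulmx0.
Qed.

Lemma invmx_uniq (A B : 'M[C]_N) : A \in unitmx -> A *m B = 1%:M -> invmx A = B.
Proof. by move=> uA AB; rewrite -[invmx A]mulmx1 -AB mulmxA mulVmx // mul1mx. Qed.

Lemma invmxM (A B : 'M[C]_N) : A \in unitmx -> B \in unitmx ->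
  invmx (A *m B) = invmx B *m invmx A.
Proof.
move=> uA uB; apply: invmx_uniq; first by rewrite unitmx_mul uA.
by rewrite -mulmxA (mulmxA B) mulmxV // mul1mx mulmxV.
Qed.

Lemma conjmxM (q g A : 'M[C]_N) : q \in unitmx -> g \in unitmx ->
  cj q (cj g A) = cj (q *m g) A.
Proof. by move=> uq ug; rewrite !conjmxE invmxM // !mulmxA. Qed.

Lemma conjmxK (h A : 'M[C]_N) : h \in unitmx -> cj (invmx h) (cj h A) = A.
Proof.
by move=> uh; rewrite !conjmxE invmxK !mulmxA mulVmx // mul1mx mulmxKV.
Qed.

Lemma conjmx_bracket (h A B : 'M[C]_N) : h \in unitmx ->
  lie_bracket (cj h A) (cj h B) = cj h (lie_bracket A B).
Proof.
by move=> uh; rewrite /lie_bracket !conjmxE mulmxBr mulmxBl !mulmxA !mulmxKV.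
Qed.

Lemma iter_conjmx (g A : 'M[C]_N) (w : 'cV[C]_N) k : g \in unitmx ->
  iter k (mulmx (cj g A)) w = g *m iter k (mulmx A) (invmx g *m w).
Proof.
move=> ug; elim: k => [|k IH] /=; first by rewrite mulKVmx.
by rewrite IH conjmxE !mulmxA mulmxKV.
Qed.

Lemma central_conjmx (h D : 'M[C]_N) : h \in unitmx ->
  central (cj h D) -> central D.
Proof.
move=> uh /is_scalar_mxP [a Ha]; apply/is_scalar_mxP; exists a.
rewrite -(conjmxK D uh) Ha !conjmxE scalar_mxC -mulmxA.
by rewrite mulmxV ?unitmx_inv // mulmx1.
Qed.

Lemma semisimple_conj_diag (h D : 'M[C]_N) : h \in unitmx -> is_diag_mx D ->
  semisimple (cj h D).
Proof. by move=> uh dD; exists (invmx h); rewrite ?unitmx_inv ?conjmxK. Qed.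

Lemma conjmx_lin (k A B D : 'M[C]_N) (t s : C) :
  cj k (A + t *: B - s *: D) = cj k A + t *: cj k B - s *: cj k D.
Proof.
by rewrite !conjmxE mulmxBr mulmxDr mulmxBl mulmxDl -!scalemxAr -!scalemxAl.
Qed.

Lemma shear_inverse (E : 'M[C]_N) (t : C) : E *m E = 0 ->
  (1%:M + t *: E) *m (1%:M - t *: E) = 1%:M.
Proof.
move=> EE; rewrite mulmxBr mulmx1 mulmxDl mul1mx -scalemxAl -scalemxAr EE.
by rewrite !scaler0 addr0 addrK.
Qed.

Lemma conj_shear (E A : 'M[C]_N) (t : C) : E *m E = 0 ->
  cj (1%:M + t *: E) A =
  A + t *: (E *m A - A *m E) - (t * t) *: (E *m A *m E).
Proof.
move=> EE; have [u_tE _] := mulmx1_unit (shear_inverse t EE).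
rewrite conjmxE (invmx_uniq u_tE (shear_inverse t EE)).
rewrite mulmxDl mul1mx -scalemxAl mulmxBr mulmx1 mulmxDl -!scalemxAr -scalemxAl.
by rewrite scalerA scalerBr opprD !addrA.
Qed.

End Conjugation.

Section JordanBlock.
Variables (C : numClosedFieldType) (n : nat).
Local Notation N := n.+1.
Local Notation J := (nilJordan C N).

Lemma jordan_mulmx m (M : 'M[C]_(N, m)) (i : 'I_N) k :
  (J *m M) i k = if (i.+1 < N)%N then M (inord i.+1) k else 0.
Proof.
rewrite mxE; case: ifP => Hi.
  rewrite (bigD1 (Ordinal Hi)) //= big1 ?addr0 => [|j Hj].
    by rewrite mxE /= eqxx mul1r -[Ordinal Hi]inord_val.
  rewrite mxE; case: eqP => [Ej|]; last by rewrite mul0r.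
  by case/eqP: Hj; apply: val_inj; rewrite /= Ej.
rewrite big1 // => j _; rewrite mxE; case: eqP => [Ej|]; last by rewrite mul0r.
by move: (ltn_ord j); rewrite Ej Hi.
Qed.

Lemma mulmx_jordan (M : 'M[C]_N) (i k : 'I_N) :
  (M *m J) i k = if (0 < k)%N then M i (inord k.-1) else 0.
Proof.
rewrite mxE; case: ifP => Hk.
  have Hk1 : (k.-1 < N)%N by rewrite (leq_ltn_trans (leq_pred _)).
  rewrite (bigD1 (Ordinal Hk1)) //= big1 ?addr0 => [|j Hj].
    by rewrite mxE /= prednK // eqxx mulr1 -[Ordinal Hk1]inord_val.
  rewrite mxE; case: eqP => [Ej|]; last by rewrite mulr0.
  by case/eqP: Hj; apply: val_inj; rewrite /= Ej.
rewrite big1 // => j _; rewrite mxE; case: eqP => [Ej|]; last by rewrite mulr0.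
by move: Hk; rewrite Ej.
Qed.

Lemma jordan_iter k (w : 'cV[C]_N) (i : 'I_N) :
  (iter k (mulmx J) w) i 0 = if (i + k < N)%N then w (inord (i + k)) 0 else 0.
Proof.
elim: k i => [|k IH] i /=; first by rewrite addn0 ltn_ord inord_val.
rewrite jordan_mulmx; case: ifP => Hi; last by rewrite ifF //; lia.
by rewrite IH inordK // addSnnS.
Qed.

Lemma jordan_nilpotent (w : 'cV[C]_N) : iter N (mulmx J) w = 0.
Proof.
by apply/matrixP => i j; rewrite (ord1 j) jordan_iter mxE ifF //; lia.
Qed.

Lemma jordan_iter_top (w : 'cV[C]_N) :
  iter n (mulmx J) w = w ord_max 0 *: delta_mx 0 0.
Proof.
apply/matrixP => i j; rewrite (ord1 j) jordan_iter !mxE eqxx andbT.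
have [i0|ipos] := posnP i.
  have -> : i = 0 by exact: val_inj.
  by rewrite add0n ltnSn eqxx mulr1 -[ord_max]inord_val.
have -> : (i == 0) = false by apply/eqP => E; move: ipos; rewrite E.
by rewrite mulr0 ifF //; lia.
Qed.

End JordanBlock.

Section Krylov.
Variables (C : numClosedFieldType) (n : nat).
Local Notation N := n.+1.
Local Notation J := (nilJordan C N).
Local Notation cj := (@Defs.conjmx C N).

Definition krylov (A : 'M[C]_N) (w : 'cV[C]_N) : 'M[C]_N :=
  \matrix_(i, k) (iter (n - k) (mulmx A) w) i 0.

Lemma krylov_conjmx (g A : 'M[C]_N) (w : 'cV[C]_N) : g \in unitmx ->
  krylov (cj g A) w = g *m krylov A (invmx g *m w).
Proof.
move=> ug; apply/matrixP => i k; rewrite mxE iter_conjmx // !mxE.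
by apply: eq_bigr => j _; rewrite mxE.
Qed.

Lemma krylov_last_col (A : 'M[C]_N) (w : 'cV[C]_N) :
  krylov A w *m delta_mx ord_max 0 = w.
Proof. by rewrite -colE; apply/matrixP => i j; rewrite (ord1 j) !mxE subnn. Qed.

Lemma krylov_intertwines (A : 'M[C]_N) (w : 'cV[C]_N) :
  iter N (mulmx A) w = 0 -> A *m krylov A w = krylov A w *m J.
Proof.
move=> AN0; apply/matrixP => i k; rewrite mulmx_jordan.
have -> : (A *m krylov A w) i k = (A *m iter (n - k) (mulmx A) w) i 0.
  by rewrite !mxE; apply: eq_bigr => j _; rewrite mxE.
case: ifP => Hk.
  rewrite [RHS]mxE inordK; last by rewrite (leq_ltn_trans (leq_pred _)).
  by have -> : (n - k.-1 = (n - k).+1)%N by move: (ltn_ord k); lia.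
have -> : k = 0 :> nat by lia.
by rewrite subn0 -[A *m _]/(iter N (mulmx A) w) AN0 mxE.
Qed.

(* The Krylov matrix of J is triangular with diagonal w_last. *)
Lemma det_krylov_jordan (w : 'cV[C]_N) : \det (krylov J w) = w ord_max 0 ^+ N.
Proof.
rewrite -det_tr det_trig.
  rewrite -[X in _ ^+ X]card_ord -prodr_const; apply: eq_bigr => i _.
  rewrite !mxE jordan_iter subnKC ?ltnS ?leq_ord //= leqnn.
  by rewrite -[ord_max]inord_val.
apply/is_trig_mxP => i j Hij; rewrite !mxE jordan_iter ifF //.
by move: (ltn_ord i); lia.
Qed.

(* v is a cyclic vector of g J g^-1 iff its last coordinate in the basis g is
   non-zero; both properties are read on the last Krylov vector. *)
Lemma conj_jordan_top (g : 'M[C]_N) (v : 'cV[C]_N) : g \in unitmx ->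
  (iter n (mulmx (cj g J)) v != 0) = ((invmx g *m v) ord_max 0 != 0).
Proof.
move=> ug; rewrite iter_conjmx // jordan_iter_top mulmx_unit_eq0 // scaler_eq0.
have -> : (delta_mx 0 0 == 0 :> 'cV[C]_N) = false.
  by apply/negP => /eqP/matrixP/(_ 0 0); rewrite !mxE eqxx; apply/eqP/oner_neq0.
by rewrite orbF.
Qed.

Lemma conj_jordan_nilpotent (g : 'M[C]_N) (v : 'cV[C]_N) : g \in unitmx ->
  iter N (mulmx (cj g J)) v = 0.
Proof. by move=> ug; rewrite iter_conjmx // jordan_nilpotent mulmx0. Qed.

Lemma krylov_conj_jordan_unit (g : 'M[C]_N) (v : 'cV[C]_N) : g \in unitmx ->
  (invmx g *m v) ord_max 0 != 0 -> krylov (cj g J) v \in unitmx.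
Proof.
move=> ug Hv; rewrite krylov_conjmx // unitmx_mul ug unitmxE.
by rewrite det_krylov_jordan unitfE expf_neq0.
Qed.

Lemma krylov_similar (A B : 'M[C]_N) (w : 'cV[C]_N) :
  iter N (mulmx A) w = 0 -> iter N (mulmx B) w = 0 ->
  krylov A w \in unitmx -> krylov B w \in unitmx ->
  exists2 p, stabP w p & B = cj p A.
Proof.
move=> AN0 BN0 uKA uKB.
have conjK M : iter N (mulmx M) w = 0 -> krylov M w \in unitmx ->
    M = cj (krylov M w) J.
  by move=> MN0 uKM; rewrite conjmxE -krylov_intertwines // mulmxK.
exists (krylov B w *m invmx (krylov A w)).
  split; first by rewrite unitmx_mul uKB unitmx_inv.
  rewrite -[X in _ *m X = _](krylov_last_col A w) mulmxA mulmxKV //.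
  exact: krylov_last_col.
rewrite -conjmxM ?unitmx_inv // {2}(conjK A) // conjmxK //.
exact: conjK.
Qed.

End Krylov.

Section CyclicOrbit.
Variables (C : numClosedFieldType) (n : nat).
Local Notation N := n.+1.
Local Notation J := (nilJordan C N).
Local Notation cj := (@Defs.conjmx C N).
Variables (v0 : 'cV[C]_N) (g : 'M[C]_N).
Hypotheses (ug : g \in unitmx) (v0_cyclic : (invmx g *m v0) ord_max 0 != 0).
Local Notation X := (cj g J).

Lemma P_orbit_jordan (k : 'M[C]_N) : k \in unitmx ->
  (invmx k *m v0) ord_max 0 != 0 -> P_orbit v0 X (cj k J).
Proof.
by move=> uk Hk; apply: krylov_similar;
  rewrite ?conj_jordan_nilpotent ?krylov_conj_jordan_unit.
Qed.

Lemma P_orbit_cyclic (B : 'M[C]_N) :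
  P_orbit v0 X B <-> GL_orbit X B /\ iter n (mulmx B) v0 != 0.
Proof.
split=> [[p [up pv0] ->] | [[q uq ->]]].
  have pv0' : invmx p *m v0 = v0 by rewrite -{1}pv0 mulKmx.
  split; first by exists p.
  by rewrite iter_conjmx // pv0' mulmx_unit_eq0 // conj_jordan_top.
have uqg : q *m g \in unitmx by rewrite unitmx_mul uq.
rewrite conjmxM // conj_jordan_top // => Hqg.
exact: P_orbit_jordan.
Qed.

End CyclicOrbit.

Section Lipschitz.
Variables (C : numClosedFieldType) (n : nat).
Local Notation N := n.+1.

Definition loc_lipschitz (F : 'M[C]_N -> C) (A : 'M[C]_N) : Prop :=
  exists2 L : C, 0 <= L & forall d B, 0 < d -> d <= 1 -> mx_close d B A ->
    `|F B - F A| <= L * d.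

Lemma lipschitz_const c A : loc_lipschitz (fun _ => c) A.
Proof. by exists 0 => // d B _ _ _; rewrite subrr normr0 mul0r. Qed.

Lemma lipschitz_entry i j A : loc_lipschitz (fun B => B i j) A.
Proof. by exists 1 => // d B _ _ H; rewrite mul1r ltW. Qed.

Lemma lipschitz_ext F G A : (forall B, F B = G B) ->
  loc_lipschitz F A -> loc_lipschitz G A.
Proof. by move=> FG [L L0 HF]; exists L => // d B d0 d1 HB; rewrite -!FG HF. Qed.

Lemma lipschitz_add F G A : loc_lipschitz F A -> loc_lipschitz G A ->
  loc_lipschitz (fun B => F B + G B) A.
Proof.
move=> [LF LF0 HF] [LG LG0 HG]; exists (LF + LG); first exact: addr_ge0.
move=> d B d0 d1 H; rewrite opprD addrACA mulrDl.
by apply: le_trans (ler_normD _ _) _; apply: lerD; [apply: HF | apply: HG].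
Qed.

Lemma lipschitz_mul F G A : loc_lipschitz F A -> loc_lipschitz G A ->
  loc_lipschitz (fun B => F B * G B) A.
Proof.
move=> [LF LF0 HF] [LG LG0 HG].
exists (LF * (`|G A| + LG) + `|F A| * LG).
  by rewrite addr_ge0 // mulr_ge0 // addr_ge0.
move=> d B d0 d1 H.
have -> : F B * G B - F A * G A = (F B - F A) * G B + F A * (G B - G A).
  by rewrite mulrBl mulrBr addrA subrK.
have GB_bound : `|G B| <= `|G A| + LG.
  rewrite -[G B](subrK (G A)) addrC; apply: le_trans (ler_normD _ _) _.
  rewrite lerD2l; apply: le_trans (HG d B d0 d1 H) _.
  by rewrite -{2}[LG]mulr1 ler_wpM2l.
apply: le_trans (ler_normD _ _) _; rewrite !normrM mulrDl.
apply: lerD; first by rewrite mulrAC ler_pM // HF.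
by rewrite -mulrA ler_wpM2l // HG.
Qed.

Lemma lipschitz_sum (I : Type) (r : seq I) (F : I -> 'M[C]_N -> C) A :
  (forall i, loc_lipschitz (F i) A) ->
  loc_lipschitz (fun B => \sum_(i <- r) F i B) A.
Proof.
move=> HF; elim: r => [|x r IH].
  by apply: lipschitz_ext (lipschitz_const 0 A) => B; rewrite big_nil.
by apply: lipschitz_ext (lipschitz_add (HF x) IH) => B; rewrite big_cons.
Qed.

Lemma lipschitz_iter (v : 'cV[C]_N) k i A :
  loc_lipschitz (fun B => (iter k (mulmx B) v) i 0) A.
Proof.
elim: k i => [|k IH] i /=; first exact: lipschitz_const.
apply: lipschitz_ext (lipschitz_sum (index_enum 'I_N) _) => [B|j].
  by rewrite mxE.
exact: lipschitz_mul (lipschitz_entry _ _ _) (IH _).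
Qed.

Lemma small_scale (L a : C) : 0 <= L -> 0 < a ->
  exists d : C, [/\ 0 < d, d <= 1 & L * d < a].
Proof.
move=> L0 a0; have D0 : 0 < L + a + 1 by rewrite -addrA ltr_wpDl ?addr_gt0.
exists (a / (L + a + 1)); split.
- by rewrite divr_gt0.
- by rewrite ler_pdivrMr // mul1r -addrA addrCA lerDl addr_ge0.
- by rewrite mulrA ltr_pdivrMr // mulrC ltr_pM2l // -addrA ltrDl addr_gt0.
Qed.

Lemma close_quadratic_path (X Q1 Q2 : 'M[C]_N) (e : C) : 0 < e ->
  exists2 t : C, 0 < t & mx_close e (X + t *: Q1 - (t * t) *: Q2) X.
Proof.
move=> e0; set S := \sum_i \sum_j (`|Q1 i j| + `|Q2 i j|).
have entry_ge0 i j : 0 <= `|Q1 i j| + `|Q2 i j| by rewrite addr_ge0.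
have entry_le_S i j : `|Q1 i j| + `|Q2 i j| <= S.
  rewrite /S (bigD1 i) //= (bigD1 j) //= -addrA lerDl.
  apply: addr_ge0; first by apply: sumr_ge0 => l _.
  by apply: sumr_ge0 => k _; apply: sumr_ge0 => l _.
have [t [t0 t1 tS]] := small_scale (le_trans (entry_ge0 0 0) (entry_le_S 0 0)) e0.
exists t => // i j; rewrite !mxE -[X i j + _ - _]addrA [X i j + _]addrC addrK.
apply: le_lt_trans (ler_normB _ _) _; rewrite !normrM ger0_norm ?ltW //.
apply: le_lt_trans _ tS; rewrite -mulrA -mulrDr [S * t]mulrC.
apply: ler_wpM2l; first exact: ltW.
by apply: le_trans _ (entry_le_S i j); rewrite lerD2l ler_piMl.
Qed.

End Lipschitz.

Section OpenDense.
Variables (C : numClosedFieldType) (n : nat).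
Local Notation N := n.+1.
Local Notation J := (nilJordan C N).
Local Notation cj := (@Defs.conjmx C N).
Variables (v0 : 'cV[C]_N) (g : 'M[C]_N).
Hypotheses (v0_neq0 : v0 != 0) (ug : g \in unitmx)
  (v0_cyclic : (invmx g *m v0) ord_max 0 != 0).
Local Notation X := (cj g J).

(* Being a cyclic vector is an open condition, so P.X is open in G.X. *)
Lemma P_orbit_open : open_in (P_orbit v0 X) (GL_orbit X).
Proof.
split=> [B /(P_orbit_cyclic ug v0_cyclic) [] // | A PA].
have [_] := (P_orbit_cyclic ug v0_cyclic A).1 PA.
case/matrix0Pn => i [j]; rewrite (ord1 j) -normr_gt0 => Ai.
have [L L0 HL] := lipschitz_iter v0 n i A.
have [d [d0 d1 Ld]] := small_scale L0 Ai.
exists d => // B GB BA; apply/(P_orbit_cyclic ug v0_cyclic); split => //.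
apply/eqP => B0; have := HL d B d0 d1 BA.
by rewrite B0 mxE sub0r normrN => /le_lt_trans/(_ Ld); rewrite ltxx.
Qed.

(* A shear of the last basis vector along e_i0 gives v0 a non-zero last
   coordinate as soon as its i0-th coordinate is non-zero. *)
Lemma shear_top_coord (w : 'cV[C]_N) (i0 : 'I_N) (t : C) :
  ((1%:M - t *: delta_mx ord_max i0) *m w) ord_max 0 = w ord_max 0 - t * w i0 0.
Proof.
rewrite mulmxBl mul1mx -scalemxAl !mxE; congr (_ - _ * _).
rewrite (bigD1 i0) //= big1 ?addr0 => [|k Hk]; first by rewrite mxE !eqxx mul1r.
by rewrite mxE (negbTE Hk) andbF mul0r.
Qed.

Lemma P_orbit_dense : dense_in (P_orbit v0 X) (GL_orbit X).
Proof.
move=> A [q uq ->] e e0; set k := q *m g.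
have uk : k \in unitmx by rewrite unitmx_mul uq.
rewrite conjmxM //; set w := invmx k *m v0.
have [w_top|w_top] := eqVneq (w ord_max 0) 0; last first.
  by exists (cj k J); [exact: P_orbit_jordan | move=> i j; rewrite subrr normr0].
have : w != 0 by rewrite -(mulmx_unit_eq0 _ uk) mulKVmx.
case/matrix0Pn => i0 [j]; rewrite (ord1 j) => w_i0.
have i0_last : ord_max != i0 by apply: contraNneq w_i0 => <-; rewrite w_top.
pose E : 'M[C]_N := delta_mx ord_max i0.
have EE : E *m E = 0 by rewrite mul_delta_mx_0 // eq_sym.
have [t t0 close] := close_quadratic_path (cj k J) (cj k (E *m J - J *m E))
  (cj k (E *m J *m E)) e0.
have [u_tE _] := mulmx1_unit (shear_inverse t EE).
exists (cj (k *m (1%:M + t *: E)) J); last first.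
  by rewrite -conjmxM ?conj_shear // conjmx_lin.
apply: (P_orbit_jordan ug v0_cyclic); first by rewrite unitmx_mul uk.
rewrite invmxM // (invmx_uniq u_tE (shear_inverse t EE)) -mulmxA -/w.
by rewrite shear_top_coord w_top sub0r oppr_eq0 mulf_neq0 // lt0r_neq0.
Qed.

End OpenDense.

Section NonCyclic.
Variables (C : numClosedFieldType) (n : nat).
Local Notation N := n.+1.
Local Notation J := (nilJordan C N).
Local Notation cj := (@Defs.conjmx C N).

Lemma last_nonzero_coord (u : 'cV[C]_N) : u != 0 ->
  exists2 m : 'I_N, u m 0 != 0 & forall i : 'I_N, (m < i)%N -> u i 0 = 0.
Proof.
case/matrix0Pn => i0 [j]; rewrite (ord1 j) => ui0.
have [m um m_max] := @arg_maxnP _ i0 (fun i => u i 0 != 0) val ui0.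
exists m => // i mi; apply/eqP; apply: contraTT mi => ui.
by rewrite -leqNgt; exact: m_max.
Qed.

(* The upper triangular Toeplitz matrix whose column m is u, i.e. the
   polynomial sum_(d <= m) u_(m-d) J^d in the Jordan block. *)
Definition toeplitz (u : 'cV[C]_N) (m : nat) : 'M[C]_N :=
  \matrix_(i, j) (if (i <= j <= i + m)%N then u (inord (m - (j - i))) 0 else 0).

(* Being a polynomial in J, the Toeplitz matrix commutes with J; it is
   invertible when its diagonal u_m is non-zero, and maps e_m to u. *)
Lemma toeplitz_jordan_comm (u : 'cV[C]_N) m :
  toeplitz u m *m J = J *m toeplitz u m.
Proof.
apply/matrixP => i k; rewrite mulmx_jordan jordan_mulmx.
have k1 : (k.-1 < N)%N by rewrite (leq_ltn_trans (leq_pred _)).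
case: ifP => k0; case: ifP => iN //.
- rewrite !mxE (inordK k1) (inordK iN).
  have -> : (k.-1 - i = k - i.+1)%N by lia.
  by have -> : (i <= k.-1 <= i + m)%N = (i.+1 <= k <= i.+1 + m)%N by lia.
- by rewrite mxE (inordK k1) ifF //; move: (ltn_ord k); lia.
- by rewrite mxE (inordK iN) ifF //; lia.
Qed.

Lemma toeplitz_unit (u : 'cV[C]_N) (m : 'I_N) : u m 0 != 0 ->
  toeplitz u m \in unitmx.
Proof.
move=> um; rewrite unitmxE -det_tr det_trig.
  rewrite (eq_bigr (fun _ => u m 0)) => [|i _].
    by rewrite prodr_const unitfE expf_neq0.
  by rewrite !mxE leqnn leq_addr subnn subn0 inord_val.
by apply/is_trig_mxP => i j ji; rewrite !mxE ifF //; lia.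
Qed.

Lemma toeplitz_col (u : 'cV[C]_N) (m : 'I_N) :
  (forall i : 'I_N, (m < i)%N -> u i 0 = 0) -> toeplitz u m *m delta_mx m 0 = u.
Proof.
move=> u_max; rewrite -colE; apply/matrixP => i j; rewrite (ord1 j) !mxE.
case: ifP => im; first by rewrite subKn ?inord_val //; lia.
by rewrite u_max //; lia.
Qed.

Definition step_diag (m : nat) : 'M[C]_N := diag_mx (\row_(j < N) ((m < j)%N)%:R).

Lemma jordan_bracket_step (m m1 : 'I_N) : val m1 = m.+1 ->
  lie_bracket J (step_diag m) = delta_mx m m1.
Proof.
move=> m1E; apply/matrixP => i j.
rewrite /lie_bracket /step_diag mul_mx_diag mul_diag_mx !mxE -!val_eqE /= m1E.
have [->|ji] := eqVneq (val j) i.+1; last first.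
  rewrite mulr0n mul0r mulr0 subrr.
  by case: eqP => [im|//]; rewrite -im (negbTE ji).
rewrite /= eqSS mulr1n mul1r mulr1 ltnS leq_eqVlt andbb eq_sym.
by case: eqP => [->|_]; rewrite ?ltnn ?subr0 ?subrr.
Qed.

Lemma rank_one_perp (v0 : 'cV[C]_N) (y : 'rV[C]_N) : lie_p_perp v0 (v0 *m y).
Proof. by move=> A Av0; rewrite mulmxA Av0 mul0mx mxtrace0. Qed.

Lemma noncyclic_witness (v0 : 'cV[C]_N) (g : 'M[C]_N) :
  v0 != 0 -> g \in unitmx -> (invmx g *m v0) ord_max 0 = 0 ->
  exists Y : 'M[C]_N,
    [/\ semisimple Y, ~ central Y & lie_p_perp v0 (lie_bracket (cj g J) Y)].
Proof.
move=> v0_neq0 ug u_top; set u := invmx g *m v0.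
have : u != 0 by rewrite -(mulmx_unit_eq0 _ ug) mulKVmx.
case/last_nonzero_coord => m um m_max.
have m_last : m != ord_max by apply: contraNneq um => ->; apply/eqP.
have mn : (m.+1 < N)%N by move: m_last (ltn_ord m); rewrite -val_eqE /=; lia.
pose m1 : 'I_N := Ordinal mn.
have uT : toeplitz u m \in unitmx by exact: toeplitz_unit.
pose h := g *m toeplitz u m.
have uh : h \in unitmx by rewrite unitmx_mul ug uT.
have TJ : cj (toeplitz u m) J = J.
  by rewrite conjmxE toeplitz_jordan_comm mulmxK.
have X_h : cj g J = cj h J by rewrite -conjmxM // TJ.
have v0_h : v0 = h *m delta_mx m 0 by rewrite -mulmxA toeplitz_col // mulKVmx.
exists (cj h (step_diag m)); split.
- by apply: semisimple_conj_diag; rewrite ?diag_mx_is_diag.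
- move/(central_conjmx uh)/is_scalar_mxP => [a Da].
  have := congr1 (fun M : 'M[C]_N => M m m - M m1 m1) Da.
  rewrite /step_diag !mxE /= ltnn ltnSn !eqxx subrr sub0r mulr1n => /eqP.
  by rewrite oppr_eq0 oner_eq0.
- rewrite X_h conjmx_bracket // (jordan_bracket_step (m1 := m1)) // conjmxE.
  rewrite -(mul_delta_mx (0 : 'I_1)) mulmxA -v0_h -mulmxA.
  exact: rank_one_perp.
Qed.

End NonCyclic.

Theorem mainTheorem11 (C : numClosedFieldType) (n : nat)
    (v0 : 'cV[C]_n) (X : 'M[C]_n) :
  v0 != 0 ->
  regular_nilpotent X ->
  ~ (open_in (P_orbit v0 X) (GL_orbit X) /\ dense_in (P_orbit v0 X) (GL_orbit X)) ->
  exists Y : 'M[C]_n,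
    [/\ semisimple Y, ~ central Y & lie_p_perp v0 (lie_bracket X Y)].
Proof.
case: n v0 X => [|n] v0 X v0_neq0 [g ug ->] not_open_dense.
  by move: v0_neq0; rewrite [v0]flatmx0 eqxx.
have [u_top|v0_cyclic] := eqVneq ((invmx g *m v0) ord_max 0) 0.
  exact: noncyclic_witness v0_neq0 ug u_top.
case: not_open_dense; split.
  exact: P_orbit_open ug v0_cyclic.
exact: P_orbit_dense v0_neq0 ug v0_cyclic.
Qed.
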